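(* For nonnegative integers $n,m$, \[\sum_{r=0}^n\sum_{s=0}^m\mathcal{K}_{n,m;r,s}(z,w;q)\,\Phi_{r,s}(1,1;z,w;q)=\Phi_{n,m}(1,1;z,w;q)\] and \[\sum_{r=0}^n\sum_{s=0}^m\mathcal{K}_{n,m;r,s}(z/q,w;q)\,\Phi_{r,s}(u,v;z,w;q)=\Phi_{n,m}(uz,vw;z,w;q).\]
   Context: For $n\in\mathbb{Z}$, $(a;q)_n=(a;q)_\infty/(aq^n;q)_\infty$ ($1/(q;q)_n=0$ for $n<0$), $(a_1,\dots,a_k;q)_n=\prod_i(a_i;q)_n$. For integers $n,m$: $\Phi_{n,m}(z,w;q):=\frac{(zwq;q)_{n+m}}{(q,zq,zwq;q)_n(q,wq,zwq;q)_m}$; \[\mathcal{K}_{n,m;r,s}(z,w;q):=\frac{z^rw^sq^{r^2-rs+s^2}}{(q;q)_{n-r}(q;q)_{m-s}};\] and \[\Phi_{n,m}(u,v;z,w;q):=\Phi_{n,m}(z/q,w;q)-\frac{uz}{(z;q)_2}\Phi_{n-1,m}(zq,w/q;q)+\frac{uvzw^2}{(w,zw;q)_2}\Phi_{n-1,m-1}(z,wq;q).\] (One has $\Phi_{n,m}(1,1;z,w;q)=\Phi_{n,m}(z,w;q)$.) *)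

From HB Require Import structures.
From mathcomp Require Import all_boot all_order all_algebra.
Set Implicit Arguments. Unset Strict Implicit. Unset Printing Implicit Defensive.
Import Order.TTheory GRing.Theory Num.Theory.
Local Open Scope ring_scope.

Definition qpoch {F : fieldType} (a q : F) (n : nat) : F :=
  \prod_(k < n) (1 - a * q ^+ k).

(* Phi_{n,m}(z,w;q) for integer n, m.  For n < 0 or m < 0 the factor
   1/(q;q)_n resp. 1/(q;q)_m is 0 by the paper's convention, hence Phi = 0. *)
Definition Phi {F : fieldType} (n m : int) (z w q : F) : F :=
  if (0 <= n) && (0 <= m) then
    let N := `|n|%N in let M := `|m|%N in
    qpoch (z * w * q) q (N + M) /
      (qpoch q q N * qpoch (z * q) q N * qpoch (z * w * q) q N *
       (qpoch q q M * qpoch (w * q) q M * qpoch (z * w * q) q M))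
  else 0.

(* K_{n,m;r,s}(z,w;q) = z^r w^s q^(r^2 - r s + s^2) / ((q;q)_{n-r} (q;q)_{m-s}),
   used only for r <= n, s <= m.  Note r^2 + s^2 - r s >= 0, so the nat
   truncated subtraction below is exact. *)
Definition Kc {F : fieldType} (n m r s : nat) (z w q : F) : F :=
  z ^+ r * w ^+ s * q ^+ (r * r + s * s - r * s)%N /
    (qpoch q q (n - r) * qpoch q q (m - s)).

Definition PhiUV {F : fieldType} (n m : nat) (u v z w q : F) : F :=
  Phi n%:Z m%:Z (z / q) w q
  - u * z / qpoch z q 2 * Phi (n%:Z - 1) m%:Z (z * q) (w / q) q
  + u * v * z * w ^+ 2 / (qpoch w q 2 * qpoch (z * w) q 2)
      * Phi (n%:Z - 1) (m%:Z - 1) z (w * q) q.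

From HB Require Import structures.
From mathcomp Require Import all_boot all_order all_algebra.
From mathcomp Require Import ring zify.
Import Order.TTheory GRing.Theory Num.Theory.
Local Open Scope ring_scope.

(* Everything rests on the basic identity (kernel_identity)
     sum_{r<=n, s<=m} K_{n,m;r,s}(Z,W) Phi_{r,s}(Z,W) = Phi_{n,m}(Z,W),
   valid as soon as q and the factors of (q;q), (Zq;q), (Wq;q), (ZWq;q)
   do not vanish.  It is proved by the WZ method.  Writing S_{N,m} for the
   left-hand side, two explicit "mates" of the summand (rational multiples
   of it, mate_r and mate_s) express the defect of the recurrence
     (1-q^N)(1-Zq^N)(1-ZWq^N) S_{N,m} = (1-ZWq^{N+m}) S_{N-1,m},
   which Phi_{N,m} also satisfies, as a sum of two telescoping differences
   (wz_certificate, dsum_recurrence).  Induction on n reduces the identity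
   to the row n = 0, which is the column m = 0 of the same identity under
   the symmetry (n,m,Z,W) <-> (m,n,W,Z) of both K and Phi.
   Part one of the theorem follows because Phi_{r,s}(1,1;z,w) = Phi_{r,s}(z,w)
   (a contiguous relation, PhiUV_11).  For part two, Phi_{r,s}(u,v;z,w) is a
   linear combination of three Phi's at shifted arguments; shifting the
   kernel K(z/q,w) accordingly (Kc_shiftl, Kc_shift) turns each of the three
   sums into an instance of the basic identity, at (z/q,w), (zq,w/q) and
   (z,wq). *)

Section QPochhammer.
Context {F : fieldType}.
Implicit Types a q : F.

Lemma qpoch0 a q : qpoch a q 0 = 1.
Proof. by rewrite /qpoch big_ord0. Qed.

Lemma qpochS a q n : qpoch a q n.+1 = qpoch a q n * (1 - a * q ^+ n).
Proof. by rewrite /qpoch big_ord_recr. Qed.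

Lemma qpochSl a q n : qpoch a q n.+1 = (1 - a) * qpoch (a * q) q n.
Proof.
rewrite /qpoch big_ord_recl expr0 mulr1; congr (_ * _).
by apply: eq_bigr => i _; rewrite /bump /= exprS mulrA.
Qed.

Lemma qpoch2 a q : qpoch a q 2 = (1 - a) * (1 - a * q).
Proof. by rewrite !qpochS qpoch0 expr0 expr1 mulr1 mul1r. Qed.

Lemma qpoch_neq0 a q n : (forall k, 1 - a * q ^+ k != 0) -> qpoch a q n != 0.
Proof. by move=> ha; apply/prodf_neq0 => k _; apply: ha. Qed.

Lemma qpoch_shift a q n : 1 - a != 0 ->
  qpoch (a * q) q n = qpoch a q n * (1 - a * q ^+ n) / (1 - a).
Proof. by move=> ha; rewrite -qpochS qpochSl; field. Qed.

End QPochhammer.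

Section PhiBasics.
Context {F : fieldType}.
Implicit Types Z W q : F.

Lemma PhiE (r s : nat) Z W q : Phi r s Z W q =
  qpoch (Z * W * q) q (r + s) /
    (qpoch q q r * qpoch (Z * q) q r * qpoch (Z * W * q) q r *
     (qpoch q q s * qpoch (W * q) q s * qpoch (Z * W * q) q s)).
Proof. by []. Qed.

Lemma Phi_negl (m : int) Z W q : Phi (0%:Z - 1) m Z W q = 0.
Proof. by []. Qed.

Lemma Phi_negr (n : int) Z W q : Phi n (0%:Z - 1) Z W q = 0.
Proof. by rewrite /Phi andbF. Qed.

Lemma intS1 (n : nat) : n.+1%:Z - 1 = n%:Z.
Proof. by rewrite -addn1 PoszD addrK. Qed.

Lemma Phi_sym (r s : nat) Z W q : Phi r s Z W q = Phi s r W Z q.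
Proof. by rewrite !PhiE [W * Z]mulrC addnC; congr (_ / _); exact: mulrC. Qed.

End PhiBasics.

Section KernelBasics.
Context {F : fieldType}.
Implicit Types Z W q : F.

Lemma quad_sym (r s : nat) : (r * r + s * s - r * s = s * s + r * r - s * r)%N.
Proof. by rewrite addnC mulnC. Qed.

Lemma quad_succl (r s : nat) :
  (r.+1 * r.+1 + s * s - r.+1 * s + s = r * r + s * s - r * s + (2 * r).+1)%N.
Proof. have : (r * s <= r * r + s * s)%N by nia. nia. Qed.

Lemma quad_succ (r s : nat) :
  (r.+1 * r.+1 + s.+1 * s.+1 - r.+1 * s.+1 = r * r + s * s - r * s + (r + s).+1)%N.
Proof. have : (r * s <= r * r + s * s)%N by nia. nia. Qed.

Lemma qpow_quad_succl (q : F) r s : q != 0 ->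
  q ^+ (r.+1 * r.+1 + s * s - r.+1 * s) = q ^+ (r * r + s * s - r * s) * q ^+ (2 * r).+1 / q ^+ s.
Proof. by move=> hq0; rewrite -exprD -quad_succl exprD mulfK ?expf_neq0. Qed.

Lemma qpow_quad_succ (q : F) r s :
  q ^+ (r.+1 * r.+1 + s.+1 * s.+1 - r.+1 * s.+1) = q ^+ (r * r + s * s - r * s) * q ^+ (r + s).+1.
Proof. by rewrite quad_succ exprD. Qed.

Lemma Kc_sym n m r s Z W q : Kc n m r s Z W q = Kc m n s r W Z q.
Proof. by rewrite /Kc quad_sym [Z ^+ r * _]mulrC [qpoch q q (n - r) * _]mulrC. Qed.

End KernelBasics.

Definition term {F : fieldType} (n m r s : nat) (Z W q : F) : F :=
  Kc n m r s Z W q * Phi r s Z W q.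

Lemma term_sym (F : fieldType) n m r s (Z W q : F) :
  term n m r s Z W q = term m n s r W Z q.
Proof. by rewrite /term Kc_sym Phi_sym. Qed.

Definition dsum {F : fieldType} (n m : nat) (Z W q : F) : F :=
  \sum_(0 <= r < n.+1) \sum_(0 <= s < m.+1) term n m r s Z W q.

Section WZPair.
Variable F : fieldType.
Variables Z W q : F.
Hypothesis hq0 : q != 0.
Hypothesis hq : forall k, 1 - q ^+ k.+1 != 0.
Hypothesis hZ : forall k, 1 - Z * q ^+ k.+1 != 0.
Hypothesis hW : forall k, 1 - W * q ^+ k.+1 != 0.
Hypothesis hZW : forall k, 1 - Z * W * q ^+ k.+1 != 0.

Lemma fac_q k : 1 - q * q ^+ k != 0. Proof. by rewrite -exprS. Qed.
Lemma fac_Z k : 1 - Z * q * q ^+ k != 0. Proof. by rewrite -mulrA -exprS. Qed.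
Lemma fac_W k : 1 - W * q * q ^+ k != 0. Proof. by rewrite -mulrA -exprS. Qed.
Lemma fac_ZW k : 1 - Z * W * q * q ^+ k != 0. Proof. by rewrite -mulrA -exprS. Qed.

Lemma qpoch_q_neq0 k : qpoch q q k != 0. Proof. exact: qpoch_neq0 fac_q. Qed.
Lemma qpoch_Z_neq0 k : qpoch (Z * q) q k != 0. Proof. exact: qpoch_neq0 fac_Z. Qed.
Lemma qpoch_W_neq0 k : qpoch (W * q) q k != 0. Proof. exact: qpoch_neq0 fac_W. Qed.
Lemma qpoch_ZW_neq0 k : qpoch (Z * W * q) q k != 0. Proof. exact: qpoch_neq0 fac_ZW. Qed.

Ltac neq0 := rewrite ?mulf_neq0 ?invr_eq0 ?expf_neq0 ?mulrA ?hq0 ?fac_q ?fac_Z ?fac_W ?fac_ZW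
  ?qpoch_q_neq0 ?qpoch_Z_neq0 ?qpoch_W_neq0 ?qpoch_ZW_neq0 ?hZW //.

Lemma term_succl n m r s : (r < n)%N ->
  term n m r.+1 s Z W q =
  term n m r s Z W q * (Z * q ^+ (2 * r).+1 * (1 - q ^+ (n - r)) * (1 - Z * W * q ^+ (r + s).+1))
  / ((1 - q ^+ r.+1) * (1 - Z * q ^+ r.+1) * (1 - Z * W * q ^+ r.+1) * q ^+ s).
Proof.
move=> ltrn; rewrite /term /Kc !PhiE qpow_quad_succl //.
have -> : (n - r = (n - r.+1).+1)%N by lia.
rewrite addSn !qpochS !exprS.
field; neq0.
Qed.

Lemma term_succr n m r s : (s < m)%N ->
  term n m r s.+1 Z W q =
  term n m r s Z W q * (W * q ^+ (2 * s).+1 * (1 - q ^+ (m - s)) * (1 - Z * W * q ^+ (r + s).+1))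
  / ((1 - q ^+ s.+1) * (1 - W * q ^+ s.+1) * (1 - Z * W * q ^+ s.+1) * q ^+ r).
Proof.
move=> ltsm; rewrite /term /Kc !PhiE quad_sym qpow_quad_succl // (quad_sym s).
have -> : (m - s = (m - s.+1).+1)%N by lia.
rewrite addnS !qpochS !exprS.
field; neq0.
Qed.

Lemma term_predl n m r s : (r <= n)%N ->
  term n.+1 m r s Z W q * (1 - q ^+ (n.+1 - r)) = term n m r s Z W q.
Proof. by move=> lern; rewrite /term /Kc subSn // qpochS exprS; field; neq0. Qed.

Lemma Phi_succl (n m : nat) :
  Phi n.+1 m Z W q * ((1 - q ^+ n.+1) * (1 - Z * q ^+ n.+1) * (1 - Z * W * q ^+ n.+1))
  = (1 - Z * W * q ^+ (n.+1 + m)) * Phi n m Z W q.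
Proof. by rewrite !PhiE addSn !qpochS !exprS; field; neq0. Qed.

(* The WZ mates of the summand, telescoping in r and in s respectively; they
   vanish at r = 0 (resp. s = 0) and at r = N + 1 (resp. s = m + 1). *)
Definition mate_r (N m r s : nat) : F :=
  if r is r'.+1 then
    - Z * q ^+ (N + r') / q ^+ s * (1 - q ^+ (N - r')) * (1 - Z * W * q ^+ (N + s))
      * term N m r' s Z W q
  else 0.

Definition mate_s (N m r s : nat) : F :=
  if s is s'.+1 then
    Z * W * q ^+ (N + s') / q ^+ r * (1 - q ^+ (m - s')) * (q ^+ N - q ^+ r)
      * term N m r s' Z W q
  else 0.

Lemma mate_rE N m r s : (r <= N)%N ->
  mate_r N m r s =
  - q ^+ N / q ^+ r * (1 - q ^+ r) * (1 - Z * q ^+ r) * (1 - Z * W * q ^+ r)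
    * (1 - Z * W * q ^+ (N + s)) / (1 - Z * W * q ^+ (r + s)) * term N m r s Z W q.
Proof.
case: r => [|r] leN /=; first by rewrite expr0 subrr !(mulr0, mul0r).
have q2r : q ^+ (2 * r).+1 = q * q ^+ r * q ^+ r.
  by rewrite exprS mul2n -addnn exprD mulrA.
rewrite term_succl // addSn q2r (exprS q r) (exprD q N r).
field; neq0.
Qed.

Lemma mate_sE N m r s : (s <= m)%N ->
  mate_s N m r s =
  Z * q ^+ N / q ^+ s * (q ^+ N - q ^+ r) * (1 - q ^+ s) * (1 - W * q ^+ s)
    * (1 - Z * W * q ^+ s) / (1 - Z * W * q ^+ (r + s)) * term N m r s Z W q.
Proof.
case: s => [|s] lem /=; first by rewrite expr0 subrr !(mulr0, mul0r).
have q2s : q ^+ (2 * s).+1 = q * q ^+ s * q ^+ s.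
  by rewrite exprS mul2n -addnn exprD mulrA.
rewrite term_succr // addnS q2s (exprS q s) (exprD q N s).
field; neq0.
Qed.

Lemma wz_certificate N m r s : (r <= N)%N -> (s <= m)%N ->
  (1 - q ^+ N) * (1 - Z * q ^+ N) * (1 - Z * W * q ^+ N) * term N m r s Z W q
  - (1 - Z * W * q ^+ (N + m)) * (term N m r s Z W q * (1 - q ^+ (N - r)))
  = (mate_r N m r.+1 s - mate_r N m r s) + (mate_s N m r s.+1 - mate_s N m r s).
Proof.
move=> leN lem; case: (posnP (r + s)) => [/eqP | rs_gt0].
  rewrite addn_eq0 => /andP[/eqP r0 /eqP s0]; rewrite r0 s0 /=.
  by rewrite !subn0 !addn0 expr0 !divr1 exprD; ring.
have ZWrs : 1 - Z * W * q ^+ r * q ^+ s != 0.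
  by rewrite -mulrA -exprD -(prednK rs_gt0) hZW.
rewrite (@mate_rE N m r s leN) (@mate_sE N m r s lem) /=.
rewrite (exprB leN) ?unitfE // (exprB lem) ?unitfE // !exprD.
field; neq0; by rewrite ZWrs.
Qed.

(* Summing the certificate over the rectangle, both telescopes collapse. *)
Lemma dsum_recurrence N m :
  (1 - q ^+ N) * (1 - Z * q ^+ N) * (1 - Z * W * q ^+ N) * dsum N m Z W q
  = (1 - Z * W * q ^+ (N + m)) *
    \sum_(0 <= r < N.+1) \sum_(0 <= s < m.+1) (term N m r s Z W q * (1 - q ^+ (N - r))).
Proof.
apply/eqP; rewrite -subr_eq0; apply/eqP.
rewrite /dsum !mulr_sumr -sumrB.
transitivity (\sum_(0 <= r < N.+1) \sum_(0 <= s < m.+1)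
   ((mate_r N m r.+1 s - mate_r N m r s) + (mate_s N m r s.+1 - mate_s N m r s))).
  apply: eq_big_nat => r /andP[_ ltrN]; rewrite !mulr_sumr -sumrB.
  by apply: eq_big_nat => s /andP[_ ltsm]; apply: wz_certificate.
under eq_bigr => r _ do rewrite big_split.
rewrite big_split exchange_big /= big1 ?add0r.
  apply: big1 => r _; rewrite telescope_sumr //.
  by rewrite /mate_s subnn expr0 subrr mulr0 !mul0r subrr.
by move=> s _; rewrite telescope_sumr // /mate_r subnn expr0 subrr mulr0 !mul0r subrr.
Qed.

Lemma dsum_predl n m :
  \sum_(0 <= r < n.+2) \sum_(0 <= s < m.+1) (term n.+1 m r s Z W q * (1 - q ^+ (n.+1 - r)))
  = dsum n m Z W q.
Proof.
rewrite big_nat_recr //= [X in _ + X]big1 ?addr0; last first.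
  by move=> s _; rewrite subnn expr0 subrr mulr0.
apply: eq_big_nat => r /andP[_ ltrn]; apply: eq_big_nat => s _.
exact: term_predl.
Qed.

Lemma dsum_succl n m :
  dsum n m Z W q = Phi n m Z W q -> dsum n.+1 m Z W q = Phi n.+1 m Z W q.
Proof.
move=> IH; have rec := dsum_recurrence n.+1 m.
rewrite dsum_predl IH -Phi_succl in rec.
have c_neq0 : (1 - q ^+ n.+1) * (1 - Z * q ^+ n.+1) * (1 - Z * W * q ^+ n.+1) != 0.
  by neq0.
by apply: (mulfI c_neq0); rewrite rec mulrC.
Qed.

End WZPair.

Lemma dsum_sym (F : fieldType) n m (Z W q : F) : dsum n m Z W q = dsum m n W Z q.
Proof.
rewrite /dsum exchange_big; apply: eq_bigr => s _; apply: eq_bigr => r _.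
exact: term_sym.
Qed.

(* The basic identity  sum_{r,s} K_{n,m;r,s}(Z,W) Phi_{r,s}(Z,W) = Phi_{n,m}(Z,W):
   induction on n via dsum_succl, starting from the row n = 0, which is the
   column m = 0 of the identity with (Z,W) and (n,m) swapped. *)
Lemma kernel_identity (F : fieldType) (Z W q : F) :
  q != 0 -> (forall k, 1 - q ^+ k.+1 != 0) ->
  (forall k, 1 - Z * q ^+ k.+1 != 0) -> (forall k, 1 - W * q ^+ k.+1 != 0) ->
  (forall k, 1 - Z * W * q ^+ k.+1 != 0) ->
  forall n m, \sum_(r < n.+1) \sum_(s < m.+1) Kc n m r s Z W q * Phi r s Z W q
              = Phi n m Z W q.
Proof.
move=> hq0 hq hZ hW hZW.
have col0 (Z' W' : F) : (forall k, 1 - Z' * q ^+ k.+1 != 0) ->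
    (forall k, 1 - W' * q ^+ k.+1 != 0) -> (forall k, 1 - Z' * W' * q ^+ k.+1 != 0) ->
    forall n, dsum n 0 Z' W' q = Phi n 0 Z' W' q.
  move=> hZ' hW' hZW'; elim=> [|n IH]; last exact: dsum_succl.
  by rewrite /dsum !big_nat1 /term /Kc !qpoch0 !expr0 !(mul1r, invr1).
have row0 m : dsum 0 m Z W q = Phi 0 m Z W q.
  by rewrite dsum_sym Phi_sym col0 // => k; rewrite [W * Z]mulrC.
have dsumE n m : dsum n m Z W q = Phi n m Z W q.
  by elim: n => [|n IH]; [exact: row0 | exact: dsum_succl].
move=> n m; rewrite -dsumE /dsum big_mkord.
by apply: eq_bigr => r _; rewrite big_mkord.
Qed.

Section MainTheorem.
Variable F : fieldType.
Variables z w q : F.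
Hypothesis hq0 : q != 0.
Hypothesis hq : forall k : nat, 1 - q ^+ k.+1 != 0.
Hypothesis hz : forall k : nat, 1 - z * q ^+ k != 0.
Hypothesis hw : forall k : nat, 1 - w * q ^+ k != 0.
Hypothesis hzw : forall k : nat, 1 - z * w * q ^+ k != 0.

Lemma kernel_identity_at (Z W : F) (i j l : nat) :
  Z * q = z * q ^+ i -> W * q = w * q ^+ j -> Z * W * q = z * w * q ^+ l ->
  forall n m, \sum_(r < n.+1) \sum_(s < m.+1) Kc n m r s Z W q * Phi r s Z W q
              = Phi n m Z W q.
Proof.
have shift (a b : F) e : (forall k, 1 - a * q ^+ k != 0) -> b * q = a * q ^+ e ->
    forall k, 1 - b * q ^+ k.+1 != 0.
  by move=> ha hb k; rewrite exprS mulrA hb -mulrA -exprD.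
move=> eZ eW eZW; apply: kernel_identity => //.
- exact: shift hz eZ.
- exact: shift hw eW.
- exact: shift hzw eZW.
Qed.

Lemma nz_q k : 1 - q * q ^+ k != 0. Proof. by rewrite -exprS. Qed.
Lemma nz_z1 k : 1 - z * q * q ^+ k != 0. Proof. by rewrite -mulrA -exprS. Qed.
Lemma nz_w1 k : 1 - w * q * q ^+ k != 0. Proof. by rewrite -mulrA -exprS. Qed.
Lemma nz_zw1 k : 1 - z * w * q * q ^+ k != 0. Proof. by rewrite -mulrA -exprS. Qed.
Lemma nz_first {a : F} : (forall k, 1 - a * q ^+ k != 0) -> 1 - a != 0.
Proof. by move=> ha; have := ha 0%N; rewrite expr0 mulr1. Qed.

Lemma poch_q k : qpoch q q k != 0. Proof. exact: qpoch_neq0 nz_q. Qed.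
Lemma poch_z1 k : qpoch (z * q) q k != 0. Proof. exact: qpoch_neq0 nz_z1. Qed.
Lemma poch_w1 k : qpoch (w * q) q k != 0. Proof. exact: qpoch_neq0 nz_w1. Qed.
Lemma poch_zw0 k : qpoch (z * w) q k != 0. Proof. exact: qpoch_neq0 hzw. Qed.
Lemma poch_zw1 k : qpoch (z * w * q) q k != 0. Proof. exact: qpoch_neq0 nz_zw1. Qed.

Ltac neq0 := rewrite ?mulf_neq0 ?invr_eq0 ?expf_neq0 ?hq0
  ?poch_q ?poch_z1 ?poch_w1 ?poch_zw0 ?poch_zw1
  ?nz_q ?nz_z1 ?nz_w1 ?nz_zw1 ?hzw
  ?(nz_first hz) ?(nz_first hw) ?(nz_first hzw)
  ?(nz_first nz_z1) ?(nz_first nz_w1) ?(nz_first nz_zw1) //.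

Lemma PhiUV_11 (r s : nat) : PhiUV r s 1 1 z w q = Phi r s z w q.
Proof.
have bz : z / q * q = z by field.
have bw : w / q * q = w by field.
have bzw0 : z / q * w * q = z * w by field.
have bzw1 : z * q * (w / q) * q = z * w * q by field.
have bzw2 : z * (w * q) * q = z * w * q * q by ring.
rewrite /PhiUV !mul1r.
case: r => [|r].
  rewrite Phi_negl !mulr0 subr0 addr0 !PhiE !add0n !qpoch0 bzw0; field; neq0.
rewrite intS1; case: s => [|s].
  rewrite Phi_negr mulr0 addr0 !PhiE !addn0 !qpoch0 bz bzw0 bzw1.
  rewrite (qpoch_shift (z * q)) ?(nz_first nz_z1) // (qpochSl z) qpoch2 !qpochS.
  field; neq0.
rewrite intS1 !PhiE bz bw bzw0 bzw1 bzw2 addSn addnS.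
(* Express every Pochhammer symbol through the base points q, zq, wq, zwq
   (and zwq^2 for the lengths r + s), then compare. *)
have zw_rs2 : qpoch (z * w) q (r + s).+2 =
    (1 - z * w) * ((1 - z * w * q) * qpoch (z * w * q * q) q (r + s)).
  by rewrite !qpochSl.
have zwq_rs1 : qpoch (z * w * q) q (r + s).+1 = (1 - z * w * q) * qpoch (z * w * q * q) q (r + s).
  by rewrite qpochSl.
have zwq_rs2 : qpoch (z * w * q) q (r + s).+2 =
    (1 - z * w * q) * qpoch (z * w * q * q) q (r + s) * (1 - z * w * q * q ^+ (r + s).+1).
  by rewrite qpochS qpochSl.
rewrite zw_rs2 zwq_rs1 zwq_rs2 (qpochSl z q r) (qpochSl (z * w) q r) (qpochSl w q s) (qpochSl (z * w) q s).
rewrite (qpoch_shift (z * q) q r) ?(nz_first nz_z1) //.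
rewrite (qpoch_shift (z * w * q) q r) ?(nz_first nz_zw1) //.
rewrite (qpoch_shift (z * w * q) q s) ?(nz_first nz_zw1) //.
rewrite (qpoch_shift (w * q) q s) ?(nz_first nz_w1) //.
rewrite !qpoch2 !qpochS [q ^+ (r + s).+1]exprS exprD.
field; neq0.
Qed.


Lemma Kc_shiftl n m r s :
  Kc n.+1 m r.+1 s (z / q) w q = z * Kc n m r s (z * q) (w / q) q.
Proof.
rewrite /Kc subSS qpow_quad_succl // !exprMn !exprVn !exprS mul2n -addnn exprD.
field; neq0.
Qed.

Lemma Kc_shift n m r s :
  Kc n.+1 m.+1 r.+1 s.+1 (z / q) w q = z * w * Kc n m r s z (w * q) q.
Proof.
rewrite /Kc !subSS qpow_quad_succ !exprMn !exprVn !exprS exprD.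
field; neq0.
Qed.

Lemma sum_first n m :
  \sum_(r < n.+1) \sum_(s < m.+1) Kc n m r s (z / q) w q * Phi r s (z / q) w q
  = Phi n m (z / q) w q.
Proof. by apply: (@kernel_identity_at _ _ 0 1 0); rewrite ?expr0 ?expr1; field. Qed.

Lemma sum_second n m :
  \sum_(r < n.+1) \sum_(s < m.+1)
    Kc n m r s (z / q) w q * Phi (r%:Z - 1) s (z * q) (w / q) q
  = z * Phi (n%:Z - 1) m (z * q) (w / q) q.
Proof.
rewrite big_ord_recl big1 ?add0r => [|s _]; last by rewrite Phi_negl mulr0.
case: n => [|n]; first by rewrite big_ord0 Phi_negl mulr0.
rewrite intS1 -(@kernel_identity_at _ _ 2 0 1) ?expr0 ?expr1 ?expr2; try by field.
rewrite mulr_sumr; apply: eq_bigr => r _; rewrite mulr_sumr; apply: eq_bigr => s _.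
by rewrite /= intS1 Kc_shiftl mulrA.
Qed.

Lemma sum_third n m :
  \sum_(r < n.+1) \sum_(s < m.+1)
    Kc n m r s (z / q) w q * Phi (r%:Z - 1) (s%:Z - 1) z (w * q) q
  = z * w * Phi (n%:Z - 1) (m%:Z - 1) z (w * q) q.
Proof.
rewrite big_ord_recl big1 ?add0r => [|s _]; last by rewrite Phi_negl mulr0.
case: n => [|n]; first by rewrite big_ord0 Phi_negl mulr0.
under eq_bigr => r _ do rewrite big_ord_recl /= Phi_negr mulr0 add0r.
case: m => [|m]; first by rewrite Phi_negr mulr0 big1 // => r _; rewrite big_ord0.
rewrite !intS1 -(@kernel_identity_at _ _ 1 2 2) ?expr1 ?expr2; try by field.
rewrite mulr_sumr; apply: eq_bigr => r _; rewrite mulr_sumr; apply: eq_bigr => s _.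
by rewrite /= !intS1 Kc_shift mulrA.
Qed.

Lemma sum_PhiUV_11 n m :
  \sum_(r < n.+1) \sum_(s < m.+1) Kc n m r s z w q * PhiUV r s 1 1 z w q
  = PhiUV n m 1 1 z w q.
Proof.
rewrite PhiUV_11 -(@kernel_identity_at z w 1 1 1) ?expr1 //.
by apply: eq_bigr => r _; apply: eq_bigr => s _; rewrite PhiUV_11.
Qed.

(* Part two: PhiUV is linear in the three shifted Phi's, so the sum splits. *)
Lemma sum_PhiUV u v n m :
  \sum_(r < n.+1) \sum_(s < m.+1) Kc n m r s (z / q) w q * PhiUV r s u v z w q
  = PhiUV n m (u * z) (v * w) z w q.
Proof.
set c1 := z / qpoch z q 2.
set c2 := z * w ^+ 2 / (qpoch w q 2 * qpoch (z * w) q 2).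
have split_term (r s : nat) : Kc n m r s (z / q) w q * PhiUV r s u v z w q =
    Kc n m r s (z / q) w q * Phi r s (z / q) w q
    - u * c1 * (Kc n m r s (z / q) w q * Phi (r%:Z - 1) s (z * q) (w / q) q)
    + u * v * c2 * (Kc n m r s (z / q) w q * Phi (r%:Z - 1) (s%:Z - 1) z (w * q) q).
  by rewrite /PhiUV /c1 /c2; ring.
under eq_bigr => r _ do under eq_bigr => s _ do rewrite split_term.
under eq_bigr => r _ do rewrite big_split /= sumrB -!mulr_sumr.
rewrite big_split /= sumrB -!mulr_sumr sum_first sum_second sum_third /PhiUV /c1 /c2.
ring.
Qed.

End MainTheorem.

Theorem theorem4p4 (F : fieldType) (z w q u v : F)
  (hq0 : q != 0)
  (hq : forall k : nat, 1 - q ^+ k.+1 != 0)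
  (hz : forall k : nat, 1 - z * q ^+ k != 0)
  (hw : forall k : nat, 1 - w * q ^+ k != 0)
  (hzw : forall k : nat, 1 - z * w * q ^+ k != 0) :
  forall n m : nat,
    \sum_(r < n.+1) \sum_(s < m.+1)
        Kc n m r s z w q * PhiUV r s 1 1 z w q = PhiUV n m 1 1 z w q
    /\
    \sum_(r < n.+1) \sum_(s < m.+1)
        Kc n m r s (z / q) w q * PhiUV r s u v z w q
      = PhiUV n m (u * z) (v * w) z w q.
Proof.
by move=> n m; split; [apply: sum_PhiUV_11 | apply: sum_PhiUV].
Qed.
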